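(* Let $k\ge 2$ be a non-square integer, let $0=t_0<t_1<\cdots$ be the increasing enumeration of all nonnegative integers $t$ with $kT_t$ triangular, let $\xi_n\ge 0$ satisfy $T_{\xi_n}=kT_{t_n}$, and let $r$ and $\kappa=t_{r-1}+t_r$ be as in Theorem 1. Then for every integer $n\ge r$, $$\left(\xi_n-\xi_{n-r}\right)^2-\kappa\left(\xi_n+2\xi_n\xi_{n-r}+\xi_{n-r}\right)=\xi_r\left(\xi_{r-1}+1\right).$$
   Context: $T_m=\frac{m(m+1)}{2}$ denotes the $m$-th triangular number; an integer is triangular if it equals $T_m$ for some integer $m\ge0$. Theorem 1 (referenced): for non-square $k\ge2$ there is a positive integer $r$ (the rank) such that with $\kappa=t_{r-1}+t_r$ one has $\kappa=\xi_r-\xi_{r-1}-1$, $(t_{2r}-t_{r-1})/t_r=2\kappa+3$, and $t_n=2(\kappa+1)t_{n-r}-t_{n-2r}+\kappa$, $\xi_n=2(\kappa+1)\xi_{n-r}-\xi_{n-2r}+\kappa$ for all $n\ge 2r$. *)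

From HB Require Import structures.
From mathcomp Require Import all_boot all_order all_algebra.
Set Implicit Arguments. Unset Strict Implicit. Unset Printing Implicit Defensive.

(* m-th triangular number T_m = m(m+1)/2 (the division is exact). *)
Definition T (m : nat) : nat := (m * m.+1) %/ 2.

Definition triangular (x : nat) : Prop := exists m, x = T m.

From HB Require Import structures.
From mathcomp Require Import all_boot all_order all_algebra.
From mathcomp Require Import zify ring.
Set Implicit Arguments. Unset Strict Implicit. Unset Printing Implicit Defensive.
Import Order.TTheory GRing.Theory Num.Theory.
Local Open Scope ring_scope.

(* Put a_n = 2 xi_n + 1 and b_n = 2 t_n + 1.  Since T_{xi_n} = k T_{t_n},
   every pair (a_n, b_n) has Pell norm a_n^2 - k b_n^2 = 1 - k, and the recurrences of
   Theorem 1 become the homogeneous recurrences a_n = 2c a_{n-r} - a_{n-2r} (same for b)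
   with c = kappa + 1.  For three points of norm N != 0 linked in this way, the bilinear
   form a b - k y z of the first two equals c N, and then a^2 + b^2 - 2 c a b equals the
   constant N (1 - c^2).  Applied to (a_{n-r}, a_n) this shows that
   4 ((xi_n - xi_{n-r})^2 - kappa (xi_n + 2 xi_n xi_{n-r} + xi_{n-r})) does not depend on n,
   so it equals its value at n = r, where xi_0 = 0 and the relation
   kappa = xi_r - xi_{r-1} - 1 give 4 xi_r (xi_{r-1} + 1). *)

Section PellForm.
Variable R : numDomainType.
Implicit Types k c a b y z N : R.

Definition pnorm k a y : R := a ^+ 2 - k * y ^+ 2.
Definition pform k a y b z : R := a * b - k * y * z.

Lemma pnorm_step k c a y b z :
  pnorm k (2 * c * b - a) (2 * c * z - y)
  = 4 * c ^+ 2 * pnorm k b z - 4 * c * pform k a y b z + pnorm k a y.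
Proof. rewrite /pnorm /pform; ring. Qed.

(* If three consecutive points of a recurrence all have norm N, the bilinear form of the
   first two is c N (char 0 is needed to cancel the factor 4). *)
Lemma pform_of_step k c N a y b z : c != 0 ->
  pnorm k a y = N -> pnorm k b z = N ->
  pnorm k (2 * c * b - a) (2 * c * z - y) = N ->
  pform k a y b z = c * N.
Proof.
move=> c0 na nb ns.
have factored : 4 * c * (c * N - pform k a y b z) = 0.
  have expand := pnorm_step k c a y b z; rewrite ns na nb in expand.
  rewrite -(subrr N) {2}expand; ring.
move/eqP: factored; rewrite !mulf_eq0 pnatr_eq0 (negbTE c0) /= subr_eq0.
by move/eqP <-.
Qed.

Lemma pnorm_pform_identity k a y b z :
  pnorm k b z * a ^+ 2 + pnorm k a y * b ^+ 2 - 2 * a * b * pform k a y b z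
  = pnorm k a y * pnorm k b z - pform k a y b z ^+ 2.
Proof. rewrite /pnorm /pform; ring. Qed.

Lemma step_invariant k c N a y b z : N != 0 ->
  pnorm k a y = N -> pnorm k b z = N -> pform k a y b z = c * N ->
  a ^+ 2 + b ^+ 2 - 2 * c * a * b = N * (1 - c ^+ 2).
Proof.
move=> N0 na nb nf; apply: (mulfI N0).
have := pnorm_pform_identity k a y b z; rewrite na nb nf => eq.
have -> : N * (a ^+ 2 + b ^+ 2 - 2 * c * a * b)
          = N * a ^+ 2 + N * b ^+ 2 - 2 * a * b * (c * N) by ring.
by rewrite eq; ring.
Qed.

End PellForm.

Lemma T_double (z : nat) : (z * z.+1 = 2 * T z)%N.
Proof. by rewrite /T [RHS]mulnC divnK // dvdn2 oddM /=; case: (odd z). Qed.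

Lemma T_eq0 (z : nat) : T z = 0%N -> z = 0%N.
Proof. by move=> h; move: (T_double z); rewrite h muln0; case: (z). Qed.

Lemma pnorm_of_triangular (k x y : nat) : T x = (k * T y)%N ->
  pnorm k%:Z (2 * x%:Z + 1) (2 * y%:Z + 1) = 1 - k%:Z.
Proof.
move=> h.
have hn : (x * x.+1 = k * (y * y.+1))%N by rewrite !T_double h mulnCA.
have hz : x%:Z * (x%:Z + 1) = k%:Z * (y%:Z * (y%:Z + 1)).
  by move: (congr1 Posz hn); rewrite !PoszM -[x.+1]addn1 -[y.+1]addn1 !PoszD.
apply/eqP; rewrite -subr_eq0.
have -> : pnorm k%:Z (2 * x%:Z + 1) (2 * y%:Z + 1) - (1 - k%:Z)
          = 4 * (x%:Z * (x%:Z + 1) - k%:Z * (y%:Z * (y%:Z + 1))) by rewrite /pnorm; ring.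
by rewrite hz subrr mulr0.
Qed.

Lemma odd_recurrence (kap u u1 u2 : int) :
  u = 2 * (kap + 1) * u1 - u2 + kap ->
  2 * u + 1 = 2 * (kap + 1) * (2 * u1 + 1) - (2 * u2 + 1).
Proof. by move=> ->; ring. Qed.

Definition gap_form (kap p q : int) : int :=
  (q - p) ^+ 2 - kap * (q + 2 * q * p + p).

Lemma gap_form_odd (kap p q : int) :
  4 * gap_form kap p q = (2 * p + 1) ^+ 2 + (2 * q + 1) ^+ 2
                         - 2 * (kap + 1) * (2 * p + 1) * (2 * q + 1) + 2 * kap.
Proof. rewrite /gap_form; ring. Qed.

Lemma increasing_start (t : nat -> nat) :
  (forall n, (t n < t n.+1)%N) -> (exists n, t n = 0%N) -> t 0%N = 0%N.
Proof.
move=> incr [n tn0]; suff : (t 0 <= t n)%N by rewrite tn0 leqn0 => /eqP.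
by elim: n {tn0} => // n IH; apply: leq_trans IH (ltnW (incr n)).
Qed.

Section GapInvariant.
Variables (k : nat) (t xi : nat -> nat) (r : nat) (kap : int).
Hypothesis hk : (2 <= k)%N.
Hypothesis kap_ge0 : 0 <= kap.
Hypothesis hxi : forall n, T (xi n) = (k * T (t n))%N.
Hypothesis hrec_t : forall n, (2 * r <= n)%N ->
  (t n)%:Z = 2 * (kap + 1) * (t (n - r))%:Z - (t (n - 2 * r))%:Z + kap.
Hypothesis hrec_xi : forall n, (2 * r <= n)%N ->
  (xi n)%:Z = 2 * (kap + 1) * (xi (n - r))%:Z - (xi (n - 2 * r))%:Z + kap.

Lemma gap_form_constant n : (r <= n)%N ->
  4 * gap_form kap (xi (n - r))%:Z (xi n)%:Z
  = (1 - k%:Z) * (1 - (kap + 1) ^+ 2) + 2 * kap.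
Proof.
move=> hn; rewrite gap_form_odd; congr (_ + _).
have shift1 : (n + r - r = n)%N by rewrite addnK.
have shift2 : (n + r - 2 * r = n - r)%N by rewrite mul2n -addnn subnDr.
have hnr : (2 * r <= n + r)%N by lia.
have step_xi := odd_recurrence (hrec_xi hnr); rewrite shift1 shift2 in step_xi.
have step_t := odd_recurrence (hrec_t hnr); rewrite shift1 shift2 in step_t.
have norm_step := pnorm_of_triangular (hxi (n + r)); rewrite step_xi step_t in norm_step.
apply: (step_invariant _ (pnorm_of_triangular (hxi (n - r))) (pnorm_of_triangular (hxi n))).
- by rewrite subr_eq0; apply/eqP; lia.
- apply: pform_of_step norm_step => //.
  - by apply/eqP; lia.
  - exact: pnorm_of_triangular.
  - exact: pnorm_of_triangular.
Qed.

End GapInvariant.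

Theorem mainTheorem3 (k : nat) (t xi : nat -> nat) (r : nat)
  (hk : (2 <= k)%N) (hns : forall m : nat, (m * m)%N <> k)
  (* t is the increasing enumeration of {t >= 0 | k T_t triangular} *)
  (ht_incr : forall n : nat, (t n < t n.+1)%N)
  (ht_enum : forall m : nat, triangular (k * T m) <-> exists n, t n = m)
  (* xi_n >= 0 with T_{xi_n} = k T_{t_n} *)
  (hxi : forall n : nat, T (xi n) = (k * T (t n))%N)
  (* r is the rank of Theorem 1, kappa = t_{r-1} + t_r *)
  (hr : (0 < r)%N)
  (hkap : ((t r.-1 + t r)%:Z : int) = (xi r)%:Z - (xi r.-1)%:Z - 1)
  (hquot : (((t (2 * r)%N)%:Q - (t r.-1)%:Q) / (t r)%:Q : rat)
           = 2 * (t r.-1 + t r)%:Q + 3)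
  (hrec_t : forall n : nat, (2 * r <= n)%N ->
     ((t n)%:Z : int) = 2 * ((t r.-1 + t r)%:Z + 1) * (t (n - r)%N)%:Z
                        - (t (n - 2 * r)%N)%:Z + (t r.-1 + t r)%:Z)
  (hrec_xi : forall n : nat, (2 * r <= n)%N ->
     ((xi n)%:Z : int) = 2 * ((t r.-1 + t r)%:Z + 1) * (xi (n - r)%N)%:Z
                         - (xi (n - 2 * r)%N)%:Z + (t r.-1 + t r)%:Z) :
  forall n : nat, (r <= n)%N ->
    let kappa : int := (t r.-1 + t r)%:Z in
    ((xi n)%:Z - (xi (n - r)%N)%:Z) ^+ 2
      - kappa * ((xi n)%:Z + 2 * (xi n)%:Z * (xi (n - r)%N)%:Z + (xi (n - r)%N)%:Z)
    = (xi r)%:Z * ((xi r.-1)%:Z + 1).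
Proof.
move=> n hn kappa.
have t0 : t 0%N = 0%N.
  by apply: increasing_start => //; apply/ht_enum; exists 0%N; rewrite /T muln0.
have xi0 : xi 0%N = 0%N by apply: T_eq0; rewrite hxi t0 /T muln0.
have kappa_ge0 : 0 <= kappa by [].
have const := gap_form_constant hk kappa_ge0 hxi hrec_t hrec_xi.
apply: (mulfI (_ : 4 != 0)) => //.
rewrite -[_ - _]/(gap_form kappa _ _) const // -(const r) // subnn xi0.
by congr (4 * _); rewrite /gap_form /kappa hkap; ring.
Qed.
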